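(* Let $A$ and $B$ be $d\times d$ matrices over $\mathbb{C}$, where $A$ has rank one, and let $\mathsf{A}=\{A,B\}$. Then either $\varrho(\mathsf{A})=\rho(B)$, or there exists an integer $n \geq 0$ such that $\varrho(\mathsf{A})=\rho(AB^n)^{1/(n+1)}$.
   Context: For a square matrix $A$, $\rho(A)$ denotes its ordinary spectral radius. For a nonempty bounded set $\mathsf{A}$ of $d\times d$ complex matrices, the joint spectral radius is \[\varrho(\mathsf{A})=\lim_{n \to \infty} \sup\left\{\left\|A_{i_n} \cdots A_{i_1}\right\|^{1/n} \colon A_{i_j} \in \mathsf{A}\right\},\] where $\|\cdot\|$ is any matrix norm (the limit exists and is independent of the norm). Here $B^0$ is the identity matrix. *)

From HB Require Import structures.
From mathcomp Require Import all_boot all_order all_algebra.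
From mathcomp Require Import all_classical all_reals all_analysis.
From mathcomp Require Import complex.
Import numFieldNormedType.Exports.
Set Implicit Arguments. Unset Strict Implicit. Unset Printing Implicit Defensive.
Import Order.TTheory GRing.Theory Num.Theory.
Local Open Scope ring_scope.
Local Open Scope classical_set_scope.

Definition cabs (R : realType) (z : R[i]) : R := ComplexField.Normc.normc z.

Definition specrad (R : realType) (d : nat) (M : 'M[R[i]]_d) : R :=
  sup [set cabs l | l in [set l : R[i] | eigenvalue M l]].

Definition mxnorm (R : realType) (d : nat) (M : 'M[R[i]]_d) : R :=
  \big[Num.max/0]_(ij : 'I_d * 'I_d) cabs (M ij.1 ij.2).

(* product A_{w(n-1)} ... A_{w 0} of a word over a two-letter alphabet:
   letter true = A, letter false = B *)
Definition wordprod (R : realType) (d : nat) (A B : 'M[R[i]]_d) (n : nat)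
  (w : {ffun 'I_n -> bool}) : 'M[R[i]]_d :=
  \prod_(j < n) (if w (rev_ord j) then A else B).

Definition jsr_seq (R : realType) (d : nat) (A B : 'M[R[i]]_d) (n : nat) : R :=
  \big[Num.max/0]_(w : {ffun 'I_n -> bool})
     (mxnorm (wordprod A B w) `^ (n%:R^-1)).

Definition jsr2 (R : realType) (d : nat) (A B : 'M[R[i]]_d) : R :=
  limn (jsr_seq A B).

From HB Require Import structures.
From mathcomp Require Import all_boot all_order all_algebra.
From mathcomp Require Import all_classical all_reals all_analysis.
From mathcomp Require Import complex.
From mathcomp Require Import ring lra zify.
Import Order.TTheory GRing.Theory Num.Theory.
Import numFieldNormedType.Exports.
Set Implicit Arguments. Unset Strict Implicit. Unset Printing Implicit Defensive.
Local Open Scope ring_scope.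

(* Write A = u w.  Every word in A and B is either B^n or B^j u (c w B^m),
   where the scalar c is a product of the coefficients c_k = w B^k u, one for
   each factor A B^k; moreover rho(A B^k) = |c_k|.  Let l be the larger of
   rho(B) and sup_k |c_k|^(1/(k+1)).  As |c_k| = O(beta^k) for every
   beta > rho(B), this supremum is attained as soon as it exceeds rho(B).
   Schur triangularization followed by a diagonal rescaling gives
   ||B^k|| <= K beta^k for beta > rho(B), hence ||W|| <= K' beta^n for every
   word W of length n and every beta > l.  Conversely the words B^n, or
   (A B^k)^q A B^s = c_k^q A B^s, have norm at least C t^n for every t < l.
   So the n-th roots of the largest word norms converge to l. *)

Section ComplexModulus.
Variable R : realType.
Implicit Types x y : R[i].

Lemma cabs_ge0 x : 0 <= cabs x.
Proof. by case: x => a b; exact: sqrtr_ge0. Qed.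

Lemma cabs0 : cabs (0 : R[i]) = 0.
Proof. exact: ComplexField.Normc.normc0. Qed.

Lemma cabs1 : cabs (1 : R[i]) = 1.
Proof. exact: ComplexField.Normc.normc1. Qed.

Lemma cabsM x y : cabs (x * y) = cabs x * cabs y.
Proof. exact: ComplexField.Normc.normcM. Qed.

Lemma cabsV x : cabs x^-1 = (cabs x)^-1.
Proof. exact: ComplexField.Normc.normcV. Qed.

Lemma cabsX x k : cabs (x ^+ k) = cabs x ^+ k.
Proof. by elim: k => [|k IH]; rewrite ?expr0 ?cabs1 // !exprS cabsM IH. Qed.

Lemma cabs_gt0 x : (0 < cabs x) = (x != 0).
Proof.
rewrite lt_neqAle cabs_ge0 andbT eq_sym; apply/negb_inj; rewrite !negbK.
by apply/eqP/eqP => [/ComplexField.Normc.eq0_normc|->]; rewrite ?cabs0.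
Qed.

Lemma cabs_real (a : R) : 0 <= a -> cabs (a%:C)%C = a.
Proof. by move=> a0; rewrite /cabs /= expr0n /= addr0 sqrtr_sqr ger0_norm. Qed.

Lemma cabs_sum I (r : seq I) (P : pred I) (F : I -> R[i]) :
  cabs (\sum_(i <- r | P i) F i) <= \sum_(i <- r | P i) cabs (F i).
Proof.
elim/big_ind2: _ => [|a x b y ha hb|//]; first by rewrite cabs0.
exact: le_trans (@le_normcD R x y) (lerD ha hb).
Qed.

End ComplexModulus.

Section MatrixNorms.
Variable R : realType.
Local Notation C := R[i].

Definition maxnorm m n (M : 'M[C]_(m, n)) : R :=
  \big[Num.max/0]_(ij : 'I_m * 'I_n) cabs (M ij.1 ij.2).

Definition rownorm n (M : 'M[C]_n) : R := \big[Num.max/0]_i \sum_j cabs (M i j).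

Lemma mxnormE n (M : 'M[C]_n) : mxnorm M = maxnorm M.
Proof. by []. Qed.

Lemma maxnorm_ge0 m n (M : 'M[C]_(m, n)) : 0 <= maxnorm M.
Proof.
by rewrite /maxnorm; elim/big_ind: _ => // [x y hx hy|ij _]; rewrite ?le_max ?hx ?cabs_ge0.
Qed.

Lemma maxnorm_entry m n (M : 'M[C]_(m, n)) i j : cabs (M i j) <= maxnorm M.
Proof. exact: (le_bigmax 0 (fun ij : 'I_m * 'I_n => cabs (M ij.1 ij.2)) (i, j)). Qed.

Lemma maxnorm_le m n (M : 'M[C]_(m, n)) c :
  0 <= c -> (forall i j, cabs (M i j) <= c) -> maxnorm M <= c.
Proof. by move=> c0 hM; apply: bigmax_le => // -[i j] _; exact: hM. Qed.

Lemma maxnorm_gt0 m n (M : 'M[C]_(m, n)) : M != 0 -> 0 < maxnorm M.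
Proof.
move=> M0; have [i [j Mij]] : exists i j, M i j != 0.
  apply: contraNP M0 => none; apply/eqP/matrixP => i j; rewrite mxE.
  by have [//|Mij] := eqVneq (M i j) 0; case: none; exists i, j.
by apply: lt_le_trans (maxnorm_entry M i j); rewrite cabs_gt0.
Qed.

Lemma maxnorm_mul m n p (X : 'M[C]_(m, n)) (Y : 'M[C]_(n, p)) :
  maxnorm (X *m Y) <= n%:R * (maxnorm X * maxnorm Y).
Proof.
apply: maxnorm_le => [|i j]; first by rewrite !mulr_ge0 ?maxnorm_ge0.
rewrite mxE; apply: le_trans (cabs_sum _ _ _) _.
apply: le_trans (_ : \sum_(l < n) maxnorm X * maxnorm Y <= _).
  by apply: ler_sum => l _; rewrite cabsM ler_pM ?cabs_ge0 ?maxnorm_entry.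
by rewrite sumr_const card_ord mulr_natl.
Qed.

Lemma maxnorm_mul3 m n p q (X : 'M[C]_(m, n)) (Y : 'M[C]_(n, p)) (Z : 'M[C]_(p, q)) :
  maxnorm (X *m Y *m Z) <= n%:R * p%:R * maxnorm X * maxnorm Y * maxnorm Z.
Proof.
apply: le_trans (maxnorm_mul _ _) _.
apply: le_trans (_ : p%:R * (n%:R * (maxnorm X * maxnorm Y) * maxnorm Z) <= _).
  by rewrite ler_wpM2l ?ler0n // ler_wpM2r ?maxnorm_ge0 ?maxnorm_mul.
by rewrite [leRHS](_ : _ = p%:R * (n%:R * (maxnorm X * maxnorm Y) * maxnorm Z)) //; ring.
Qed.

Lemma maxnormZ m n (a : C) (X : 'M[C]_(m, n)) : maxnorm (a *: X) = cabs a * maxnorm X.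
Proof.
have le_scale b (Y : 'M[C]_(m, n)) : maxnorm (b *: Y) <= cabs b * maxnorm Y.
  apply: maxnorm_le => [|i j]; first by rewrite mulr_ge0 ?cabs_ge0 ?maxnorm_ge0.
  by rewrite mxE cabsM ler_wpM2l ?cabs_ge0 ?maxnorm_entry.
apply/eqP; rewrite eq_le le_scale /=.
have [->|a0] := eqVneq a 0; first by rewrite cabs0 mul0r maxnorm_ge0.
have ca : 0 < cabs a by rewrite cabs_gt0.
rewrite -ler_pdivlMl // -cabsV; apply: le_trans (le_scale _ _).
by rewrite scalerA mulVf // scale1r.
Qed.

Lemma rownorm_ge0 n (M : 'M[C]_n) : 0 <= rownorm M.
Proof.
rewrite /rownorm; elim/big_ind: _ => // [x y hx hy|i _]; first by rewrite le_max hx.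
by apply: sumr_ge0 => j _; exact: cabs_ge0.
Qed.

Lemma rownorm_row n (M : 'M[C]_n) i : \sum_j cabs (M i j) <= rownorm M.
Proof. exact: (le_bigmax 0 (fun i => \sum_j cabs (M i j)) i). Qed.

Lemma rownorm_le n (M : 'M[C]_n) c :
  0 <= c -> (forall i, \sum_j cabs (M i j) <= c) -> rownorm M <= c.
Proof. by move=> c0 hM; apply: bigmax_le => // i _; exact: hM. Qed.

Lemma maxnorm_le_rownorm n (M : 'M[C]_n) : maxnorm M <= rownorm M.
Proof.
apply: maxnorm_le => [|i j]; first exact: rownorm_ge0.
apply: le_trans (rownorm_row M i).
by rewrite (bigD1 j) //= lerDl; apply: sumr_ge0 => l _; exact: cabs_ge0.
Qed.

Lemma rownorm_mul n (X Y : 'M[C]_n) : rownorm (X *m Y) <= rownorm X * rownorm Y.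
Proof.
apply: rownorm_le => [|i]; first by rewrite mulr_ge0 ?rownorm_ge0.
apply: le_trans (_ : \sum_j \sum_l cabs (X i l) * cabs (Y l j) <= _).
  apply: ler_sum => j _; rewrite mxE; apply: le_trans (cabs_sum _ _ _) _.
  by apply: ler_sum => l _; rewrite cabsM.
rewrite exchange_big /=.
apply: le_trans (_ : \sum_l cabs (X i l) * rownorm Y <= _).
  by apply: ler_sum => l _; rewrite -mulr_sumr ler_wpM2l ?cabs_ge0 ?rownorm_row.
by rewrite -mulr_suml ler_wpM2r ?rownorm_ge0 ?rownorm_row.
Qed.

Lemma rownormX n (M : 'M[C]_n) k : rownorm (M ^+ k) <= rownorm M ^+ k.
Proof.
elim: k => [|k IH].
  apply: rownorm_le => // i; rewrite (bigD1 i) //= big1 => [|j /negbTE ji].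
    by rewrite mxE eqxx cabs1 addr0.
  by rewrite mxE eq_sym ji cabs0.
rewrite !exprS -mulmxE; apply: le_trans (rownorm_mul _ _) _.
by rewrite ler_wpM2l ?rownorm_ge0.
Qed.

End MatrixNorms.

Section Spectrum.
Variable R : realType.
Local Notation C := R[i].
Local Open Scope classical_set_scope.

Lemma eigenvector_mulX n (M : 'M[C]_n) (v : 'rV[C]_n) mu k :
  v *m M = mu *: v -> v *m M ^+ k = mu ^+ k *: v.
Proof.
move=> Mv; elim: k => [|k IH]; first by rewrite !expr0 mulmx1 scale1r.
by rewrite exprSr -mulmxE mulmxA IH -scalemxAl Mv scalerA exprSr.
Qed.

Lemma eigenvalue_le_maxnormX n (M : 'M[C]_n) mu k : eigenvalue M mu ->
  cabs mu ^+ k <= n%:R * maxnorm (M ^+ k).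
Proof.
move=> /eigenvalueP [v Mv v0].
have := maxnorm_mul v (M ^+ k); rewrite (eigenvector_mulX k Mv) maxnormZ cabsX.
by rewrite mulrCA mulrC ler_pM2l // maxnorm_gt0.
Qed.

Lemma specrad_ge_eigenvalue n (M : 'M[C]_n) mu : eigenvalue M mu -> cabs mu <= specrad M.
Proof.
move=> Mmu; apply: ub_le_sup; last by exists mu.
by exists (n%:R * maxnorm M) => _ [l Ml <-]; rewrite -(expr1 (cabs l)) -(expr1 M) eigenvalue_le_maxnormX.
Qed.

Lemma specrad_no_eigenvalue n (M : 'M[C]_n) :
  (forall mu, ~ eigenvalue M mu) -> specrad M = 0.
Proof.
move=> none.
have empty : [set cabs l | l in [set l : C | eigenvalue M l]] = set0.
  by apply/seteqP; split => // x [l Ml _]; case: (none l).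
by rewrite /specrad empty sup0.
Qed.

Lemma specrad_ge0 n (M : 'M[C]_n) : 0 <= specrad M.
Proof.
have [[mu Mmu]|none] := pselect (exists mu, eigenvalue M mu).
  exact: le_trans (cabs_ge0 mu) (specrad_ge_eigenvalue Mmu).
by rewrite specrad_no_eigenvalue // => mu Mmu; apply: none; exists mu.
Qed.

Lemma specrad_le n (M : 'M[C]_n) x :
  0 <= x -> (forall mu, eigenvalue M mu -> cabs mu <= x) -> specrad M <= x.
Proof.
move=> x0 hx; have [[mu Mmu]|none] := pselect (exists mu, eigenvalue M mu).
  by apply: ge_sup => [|_ [l Ml <-]]; [exists (cabs mu), mu | exact: hx].
by rewrite specrad_no_eigenvalue // => mu Mmu; apply: none; exists mu.
Qed.

Lemma specrad_gt n (M : 'M[C]_n) t : 0 <= t -> t < specrad M ->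
  exists2 mu, eigenvalue M mu & t < cabs mu.
Proof.
move=> t0; apply: contraPP => none; apply/negP; rewrite -leNgt.
apply: specrad_le => // mu Mmu; rewrite leNgt; apply/negP => tmu.
by apply: none; exists mu.
Qed.

Lemma specrad_rank1 n (u : 'cV[C]_n) (r : 'rV[C]_n) :
  specrad (u *m r) = cabs ((r *m u) 0 0).
Proof.
set c := (r *m u) 0 0.
have eig mu : eigenvalue (u *m r) mu -> mu = 0 \/ mu = c.
  move=> /eigenvalueP [v]; rewrite mulmxA [v *m u]mx11_scalar mul_scalar_mx.
  set s := (v *m u) 0 0 => rv v0.
  have [s0|s0] := eqVneq s 0.
    by move: rv v0; rewrite s0 scale0r => /esym/eqP; rewrite scalemx_eq0 => /orP[/eqP|->]; left.
  have /= := congr1 (fun X => (X *m u) 0 0) rv.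
  rewrite -!scalemxAl [LHS]mxE [RHS]mxE -/c -/s => cs.
  by right; apply: (mulIf s0); rewrite -cs mulrC.
apply/eqP; rewrite eq_le; apply/andP; split.
  by apply: specrad_le => [|mu /eig [->|->]]; rewrite ?cabs0 ?cabs_ge0.
have [->|c0] := eqVneq c 0; first by rewrite cabs0 specrad_ge0.
apply: specrad_ge_eigenvalue; apply/eigenvalueP; exists r.
  by rewrite mulmxA [r *m u]mx11_scalar mul_scalar_mx.
by apply: contra c0 => /eqP r0; rewrite /c r0 mul0mx mxE.
Qed.

End Spectrum.

Section Gelfand.
Variable R : realType.
Local Notation C := R[i].

Lemma trig_eigenvalue n (T : 'M[C]_n) i : is_trig_mx T -> eigenvalue T (T i i).
Proof.
move=> /is_trig_mxP Ttrig; rewrite /eigenvalue /eigenspace kermx_eq0 row_free_unit.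
rewrite unitmxE unitfE negbK.
have /det_trig -> : is_trig_mx (T - (T i i)%:M).
  by apply/is_trig_mxP => a b ab; rewrite !mxE Ttrig // -val_eqE /= (ltn_eqF ab) subr0.
by rewrite (bigD1 i) //= !mxE eqxx subrr mul0r.
Qed.

Lemma conjmxX n (V M : 'M[C]_n) k : V \in unitmx ->
  conjmx V (M ^+ k) = conjmx V M ^+ k.
Proof.
move=> Vu; elim: k => [|k IH]; first by rewrite !expr0 conjmx_scalar ?row_free_unit.
by rewrite !exprS -!mulmxE conjmxM ?inE ?stablemx_unit // IH.
Qed.

Definition geomdiag n (x : R) : 'M[C]_n := diag_mx (\row_(i < n) (x ^+ i)%:C%C).

Lemma geomdiagM n (x y : R) : geomdiag n x *m geomdiag n y = geomdiag n (x * y).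
Proof.
by apply/matrixP => i j; rewrite mul_diag_mx !mxE mulrnAr -rmorphM /= exprMn.
Qed.

Lemma geomdiagV n (x : R) : x != 0 -> geomdiag n x *m geomdiag n x^-1 = 1%:M.
Proof. by move=> x0; apply/matrixP => i j; rewrite geomdiagM mulfV // !mxE expr1n. Qed.

Lemma geomdiag_unit n (x : R) : x != 0 -> geomdiag n x \in unitmx.
Proof. by move=> /(geomdiagV n)/mulmx1_unit[]. Qed.

Lemma invmx_geomdiag n (x : R) : x != 0 -> invmx (geomdiag n x) = geomdiag n x^-1.
Proof.
move=> x0; rewrite -[invmx _]mul1mx -(mulmx1C (geomdiagV n x0)) -mulmxA.
by rewrite mulmxV ?geomdiag_unit // mulmx1.
Qed.

Lemma cabs_geomdiag_conj n (T : 'M[C]_n) (x y : R) i j : 0 <= x -> 0 <= y ->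
  cabs ((geomdiag n x *m T *m geomdiag n y) i j) = x ^+ i * cabs (T i j) * y ^+ j.
Proof.
by move=> x0 y0; rewrite mul_mx_diag mul_diag_mx !mxE !cabsM !cabs_real ?exprn_ge0.
Qed.

(* Conjugating by diag(1, del, del^2, ...) scales the entries below the
   diagonal by positive powers of del and leaves the diagonal unchanged. *)
Lemma rownorm_trig_geomdiag n (T : 'M[C]_n) (del rho : R) :
  is_trig_mx T -> 0 < del <= 1 -> 0 <= rho -> (forall i, cabs (T i i) <= rho) ->
  rownorm (geomdiag n del *m T *m geomdiag n del^-1) <= rho + n%:R * del * maxnorm T.
Proof.
move=> /is_trig_mxP Ttrig /andP[del0 del1] rho0 Tdiag.
have del_neq0 : del != 0 by rewrite gt_eqF.
have m0 : 0 <= del * maxnorm T by rewrite mulr_ge0 ?maxnorm_ge0 ?(ltW del0).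
apply: rownorm_le => [|i]; first by apply: addr_ge0 => //; rewrite -mulrA mulr_ge0 ?ler0n.
apply: le_trans (_ : \sum_j ((j == i)%:R * rho + del * maxnorm T) <= _); last first.
  rewrite big_split /= sumr_const card_ord -mulrA mulr_natl lerD2r.
  by rewrite (bigD1 i) //= eqxx mul1r big1 ?addr0 // => j /negbTE ->; rewrite mul0r.
apply: ler_sum => j _; rewrite cabs_geomdiag_conj ?invr_ge0 ?(ltW del0) // exprVn.
have [ji|ij|/val_inj->] := ltngtP j i.
- rewrite -mulrA [cabs _ * _]mulrC mulrA -{1}(subnK (ltnW ji)) exprD.
  rewrite -[_ * del ^+ j * _]mulrA mulfV ?expf_neq0 // mulr1 -val_eqE /= ltn_eqF // mul0r add0r.
  rewrite ler_pM ?exprn_ge0 ?cabs_ge0 ?maxnorm_entry ?(ltW del0) //.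
  case: (i - j)%N (subn_gt0 j i) => [|k _]; first by rewrite ji.
  by rewrite exprS; exact: ler_piMr (ltW del0) (exprn_ile1 _ (ltW del0) del1).
- by rewrite Ttrig // cabs0 mulr0 mul0r addr_ge0 // mulr_ge0.
- by rewrite -val_eqE eqxx /= mulr1n mul1r mulrAC mulfV ?expf_neq0 // mul1r ler_wpDr.
Qed.

Lemma rownorm_conjmx_lt n (B : 'M[C]_n) beta : (0 < n)%N -> specrad B < beta ->
  exists2 V : 'M[C]_n, V \in unitmx & rownorm (conjmx V B) <= beta.
Proof.
move=> n0 Bbeta; have [P /unitarymx_unit Pu Ttrig] := Schur B n0.
set T := conjmx P B in Ttrig.
set rho := specrad B; set m := maxnorm T.
have Tdiag i : cabs (T i i) <= rho.
  apply: specrad_ge_eigenvalue.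
  apply: (eigenvalue_conjmx (stablemx_unit _ Pu)); first by rewrite row_free_unit.
  exact: trig_eigenvalue.
have rho0 : 0 <= rho := specrad_ge0 B.
have den0 : 0 < n%:R * m + 1 by rewrite ltr_wpDl ?mulr_ge0 ?ler0n ?maxnorm_ge0.
set del := Num.min 1 ((beta - rho) / (n%:R * m + 1)).
have del0 : 0 < del by rewrite lt_min ltr01 divr_gt0 ?subr_gt0.
have del_small : rho + n%:R * del * m <= beta.
  rewrite -lerBrDl mulrAC; apply: le_trans (_ : n%:R * m * ((beta - rho) / (n%:R * m + 1)) <= _).
    by rewrite ler_wpM2l ?mulr_ge0 ?ler0n ?maxnorm_ge0 // ge_min lexx orbT.
  by rewrite mulrA ler_pdivrMr // mulrC ler_wpM2l ?subr_ge0 ?(ltW Bbeta) // lerDl.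
have del_neq0 : del != 0 by rewrite gt_eqF.
exists (geomdiag n del *m P); first by rewrite unitmx_mul geomdiag_unit.
rewrite conjuMumx ?geomdiag_unit // conjumx ?geomdiag_unit // invmx_geomdiag //.
apply: le_trans (rownorm_trig_geomdiag Ttrig _ rho0 Tdiag) del_small.
by rewrite del0 ge_min lexx.
Qed.

Lemma maxnormX_le_geometric n (B : 'M[C]_n) beta : (0 < n)%N -> specrad B < beta ->
  exists K, 0 <= K /\ forall k, maxnorm (B ^+ k) <= K * beta ^+ k.
Proof.
move=> n0 /(rownorm_conjmx_lt n0) [V Vu UB].
have beta0 : 0 <= beta := le_trans (rownorm_ge0 _) UB.
exists (n%:R * n%:R * maxnorm (invmx V) * maxnorm V).
split=> [|k]; first by rewrite !mulr_ge0 ?ler0n ?maxnorm_ge0.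
rewrite -(conjmxK (B ^+ k) Vu) conjmxX // conjVmx //.
apply: le_trans (maxnorm_mul3 _ _ _) _; rewrite [leLHS]mulrAC ler_wpM2l ?mulr_ge0 ?ler0n ?maxnorm_ge0 //.
apply: le_trans (maxnorm_le_rownorm _) _; apply: le_trans (rownormX _ _) _.
by rewrite lerXn2r ?nnegrE ?rownorm_ge0.
Qed.

End Gelfand.

Section RootLimits.
Variable R : realType.
Implicit Types (x y : R) (u : nat -> R).

Lemma powR_invnK x n : 0 <= x -> (0 < n)%N -> (x `^ n%:R^-1) ^+ n = x.
Proof.
move=> x0 n0; rewrite -powR_mulrn ?powR_ge0 // -powRrM mulVf ?powRr1 //.
by rewrite pnatr_eq0 -lt0n.
Qed.

Lemma powR_invn_le x y n : 0 <= x -> 0 <= y -> (0 < n)%N ->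
  (x `^ n%:R^-1 <= y) = (x <= y ^+ n).
Proof.
move=> x0 y0 n0; rewrite -{2}(powR_invnK x0 n0).
by rewrite ler_pXn2r // -?lt0n // nnegrE powR_ge0.
Qed.

Lemma powR_invn_ge x y n : 0 <= x -> 0 <= y -> (0 < n)%N ->
  (y <= x `^ n%:R^-1) = (y ^+ n <= x).
Proof.
move=> x0 y0 n0; rewrite -{2}(powR_invnK x0 n0).
by rewrite ler_pXn2r // -?lt0n // nnegrE powR_ge0.
Qed.

Lemma ler_bernoulli x n : 1 <= x -> 1 + n%:R * (x - 1) <= x ^+ n.
Proof.
move=> x1; elim: n => [|n IH]; first by rewrite mul0r addr0 expr0.
rewrite exprS; apply: le_trans (_ : x * (1 + n%:R * (x - 1)) <= _); last first.
  by rewrite ler_wpM2l // (le_trans ler01).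
have : 0 <= n%:R * ((x - 1) * (x - 1)) by rewrite mulr_ge0 ?ler0n ?mulr_ge0 ?subr_ge0.
rewrite -natr1; nra.
Qed.

Lemma exprn_unbounded x M : 1 < x -> exists N, forall n, (N <= n)%N -> M <= x ^+ n.
Proof.
move=> x1; have x10 : 0 < x - 1 by rewrite subr_gt0.
have := archi_boundP (divr_ge0 (normr_ge0 M) (ltW x10)).
set N := Num.Def.archi_bound _ => MN; exists N => n Nn.
apply: le_trans (ler_bernoulli n (ltW x1)); apply: le_trans (ler_norm M) _.
apply: le_trans (_ : n%:R * (x - 1) <= _); last by rewrite lerDr.
by rewrite -ler_pdivrMr // (le_trans (ltW MN)) // ler_nat.
Qed.

Lemma exists_argmax_leq u N :
  exists2 k, (k <= N)%N & forall j, (j <= N)%N -> u j <= u k.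
Proof.
have [k _ kmax] := @arg_maxP _ _ 'I_N.+1 ord0 xpredT (fun i => u i) isT.
by exists k => [|j jN]; [rewrite -ltnS | exact: (kmax (Ordinal (jN : (j < N.+1)%N)))].
Qed.

Lemma eventually_le_of_rootX u K beta gamma : 0 < beta -> beta < gamma ->
  (forall n, 0 <= u n) -> (forall n, (0 < n)%N -> u n ^+ n <= K * beta ^+ n) ->
  exists N, forall n, (N <= n)%N -> u n <= gamma.
Proof.
move=> beta0 beta_gamma u0 uK.
have [N hN] : exists N, forall n, (N <= n)%N -> K <= (gamma / beta) ^+ n.
  by apply: exprn_unbounded; rewrite ltr_pdivlMr // mul1r.
exists N.+1 => n Nn; have n0 : (0 < n)%N := leq_trans (ltn0Sn N) Nn.
rewrite -(ler_pXn2r n0) ?nnegrE ?u0 ?(le_trans (ltW beta0) (ltW beta_gamma)) //.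
apply: le_trans (uK n n0) _.
by have := hN n (ltnW Nn); rewrite expr_div_n ler_pdivlMr ?exprn_gt0.
Qed.

Lemma eventually_ge_of_rootX u c a t : 0 < c -> 0 < t -> t < a ->
  (forall n, 0 <= u n) -> (forall n, (0 < n)%N -> c * a ^+ n <= u n ^+ n) ->
  exists N, forall n, (N <= n)%N -> t <= u n.
Proof.
move=> c0 t0 ta u0 uc.
have [N hN] : exists N, forall n, (N <= n)%N -> c^-1 <= (a / t) ^+ n.
  by apply: exprn_unbounded; rewrite ltr_pdivlMr // mul1r.
exists N.+1 => n Nn; have n0 : (0 < n)%N := leq_trans (ltn0Sn N) Nn.
rewrite -(ler_pXn2r n0) ?nnegrE ?u0 ?(ltW t0) //; apply: le_trans (uc n n0).
have := hN n (ltnW Nn); rewrite expr_div_n ler_pdivlMr ?exprn_gt0 //.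
by rewrite ler_pdivrMl // mulrC.
Qed.

Lemma limn_root_sandwich u l : 0 <= l -> (forall n, 0 <= u n) ->
  (forall beta, l < beta ->
    exists K, forall n, (0 < n)%N -> u n ^+ n <= K * beta ^+ n) ->
  (forall t, 0 < t -> t < l -> exists a c,
    [/\ t < a, 0 < c & forall n, (0 < n)%N -> c * a ^+ n <= u n ^+ n]) ->
  limn u = l.
Proof.
move=> l0 u0 upper lower; apply: cvg_lim => //; apply/cvgrPdist_le => e e0.
have [N1 le_N1] : exists N, forall n, (N <= n)%N -> u n <= l + e.
  have e2 : 0 < e / 2 by rewrite divr_gt0.
  have [K uK] : exists K, forall n, (0 < n)%N -> u n ^+ n <= K * (l + e / 2) ^+ n.
    by apply: upper; rewrite ltrDl.
  apply: eventually_le_of_rootX uK => //; first exact: ltr_wpDl.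
  by rewrite ltrD2l ltr_pdivrMr // ltr_pMr // ltr1n.
have [N2 ge_N2] : exists N, forall n, (N <= n)%N -> l - e <= u n.
  have [le0|gt0] := leP (l - e) 0; first by exists 0%N => n _; exact: le_trans le0 (u0 n).
  have [|a [c [ta c0 uc]]] := lower (l - e) gt0; first by rewrite ltrBlDr ltrDl.
  exact: eventually_ge_of_rootX uc.
exists (maxn N1 N2) => // n /=; rewrite geq_max => /andP[n1 n2].
by rewrite ler_distlC ge_N2 // le_N1.
Qed.

End RootLimits.

Section Words.
Variables (R : realType) (d : nat) (A B : 'M[R[i]]_d).

Inductive word_prod : nat -> 'M[R[i]]_d -> Prop :=
| word_prod0 : word_prod 0 1
| word_prodA n P : word_prod n P -> word_prod n.+1 (A *m P)
| word_prodB n P : word_prod n P -> word_prod n.+1 (B *m P).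

Definition cycle_root k := specrad (A *m B ^+ k) `^ k.+1%:R^-1.

Lemma wordprodS n (w : {ffun 'I_n.+1 -> bool}) :
  wordprod A B w = (if w ord_max then A else B) *m
     wordprod A B [ffun j : 'I_n => w (widen_ord (leqnSn n) j)].
Proof.
rewrite /wordprod big_ord_recl mulmxE; congr (_ * _).
  by congr (if w _ then _ else _); apply: val_inj; rewrite /= subn1.
apply: eq_bigr => j _; rewrite ffunE; congr (if w _ then _ else _).
by apply: val_inj; rewrite /= /bump /= add1n subSS.
Qed.

Lemma wordprod_word_prod n (w : {ffun 'I_n -> bool}) : word_prod n (wordprod A B w).
Proof.
elim: n w => [|n IH] w; first by rewrite /wordprod big_ord0; exact: word_prod0.
by rewrite wordprodS; case: (w ord_max); [apply: word_prodA | apply: word_prodB].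
Qed.

Lemma word_prod_wordprod n P : word_prod n P ->
  exists w : {ffun 'I_n -> bool}, wordprod A B w = P.
Proof.
have extend m (w : {ffun 'I_m -> bool}) b : exists w' : {ffun 'I_m.+1 -> bool},
    w' ord_max = b /\ [ffun j : 'I_m => w' (widen_ord (leqnSn m) j)] = w.
  exists [ffun i : 'I_m.+1 => oapp w b (insub (val i))]; split.
    by rewrite ffunE insubF //= ltnn.
  apply/ffunP => j; rewrite !ffunE /= (insubT (fun k => (k < m)%N) (ltn_ord j)) /=.
  by congr (w _); apply: val_inj.
elim => [|m Q _ [w <-]|m Q _ [w <-]].
- by exists [ffun i : 'I_0 => true]; rewrite /wordprod big_ord0.
- by have [w' [wb ww]] := extend m w true; exists w'; rewrite wordprodS wb ww.
- by have [w' [wb ww]] := extend m w false; exists w'; rewrite wordprodS wb ww.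
Qed.

Lemma jsr_seq_ge0 n : 0 <= jsr_seq A B n.
Proof.
by rewrite /jsr_seq; elim/big_ind: _ => // [x y hx hy|w _]; rewrite ?le_max ?hx ?powR_ge0.
Qed.

Lemma maxnorm_le_jsr_seqX n P : (0 < n)%N -> word_prod n P ->
  maxnorm P <= jsr_seq A B n ^+ n.
Proof.
move=> n0 /word_prod_wordprod [w <-].
rewrite -powR_invn_le ?maxnorm_ge0 ?jsr_seq_ge0 // -mxnormE.
exact: (le_bigmax 0 (fun w => mxnorm (wordprod A B w) `^ n%:R^-1) w).
Qed.

Lemma jsr_seqX_le n c : (0 < n)%N -> 0 <= c ->
  (forall P, word_prod n P -> maxnorm P <= c) -> jsr_seq A B n ^+ n <= c.
Proof.
move=> n0 c0 hc; rewrite -powR_invn_ge ?jsr_seq_ge0 //.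
apply: bigmax_le => [|w _]; first exact: powR_ge0.
apply: ge0_ler_powR; rewrite ?invr_ge0 ?ler0n ?nnegrE ?mxnormE ?maxnorm_ge0 //.
exact/hc/wordprod_word_prod.
Qed.

Lemma word_prod_mulBX k n P : word_prod n P -> word_prod (k + n) (B ^+ k *m P).
Proof.
move=> wP; elim: k => [|k IH]; first by rewrite expr0 mul1mx.
by rewrite exprS -mulmxE -mulmxA; exact: word_prodB.
Qed.

Lemma word_prod_BX n : word_prod n (B ^+ n).
Proof. by rewrite -[B ^+ n]mulmx1 -[n in word_prod n]addn0; apply/word_prod_mulBX/word_prod0. Qed.

Lemma word_prod_mulABX k n P : word_prod n P ->
  word_prod (n + k.+1) (A *m B ^+ k *m P).
Proof. by move=> wP; rewrite -mulmxA addnS addnC; apply/word_prodA/word_prod_mulBX. Qed.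

Lemma jsr_seqX_ge_eigenvalue n mu : (0 < n)%N -> eigenvalue B mu ->
  cabs mu ^+ n <= d%:R * jsr_seq A B n ^+ n.
Proof.
move=> n0 Bmu; apply: le_trans (eigenvalue_le_maxnormX n Bmu) _.
by rewrite ler_wpM2l ?ler0n // maxnorm_le_jsr_seqX //; exact: word_prod_BX.
Qed.

End Words.

Lemma rank1_factor (R : fieldType) (d : nat) (A : 'M[R]_d) : \rank A = 1%N ->
  exists (u : 'cV[R]_d) (w : 'rV[R]_d), A = u *m w.
Proof.
move=> rkA; have r0 : (0 < \rank A)%N by rewrite rkA.
exists (\col_i col_base A i (Ordinal r0)), (\row_j row_base A (Ordinal r0) j).
apply/matrixP => i j; rewrite -{1}(mulmx_base A) !mxE (bigD1 (Ordinal r0)) //=.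
rewrite big1 ?addr0 ?mxE ?big_ord1 ?mxE // => l /eqP l_r0; case: l_r0.
by apply: val_inj => /=; have := ltn_ord l; move: (nat_of_ord l); rewrite rkA => -[].
Qed.

Section RankOne.
Variables (R : realType) (d : nat) (A B : 'M[R[i]]_d).
Variables (u : 'cV[R[i]]_d) (w : 'rV[R[i]]_d).
Hypotheses (Auw : A = u *m w) (A_neq0 : A != 0).
Local Notation rho := (cycle_root A B).

Definition cycle_coef k := (w *m B ^+ k *m u) 0 0.

Lemma dim_gt0 : (0 < d)%N.
Proof. by apply: leq_trans (rank_leq_row A); rewrite lt0n mxrank_eq0. Qed.

Lemma u_neq0 : u != 0.
Proof. by apply: contraNneq A_neq0; rewrite Auw => ->; rewrite mul0mx. Qed.

Lemma mulmx_ABXu k : A *m B ^+ k *m u = cycle_coef k *: u.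
Proof. by rewrite Auw -(mulmxA u w) -mulmxA [_ *m u]mx11_scalar mul_mx_scalar. Qed.

Lemma mulmx_ABXA k p (M : 'M[R[i]]_(d, p)) : A *m B ^+ k *m (A *m M) = cycle_coef k *: (A *m M).
Proof. by rewrite {2}Auw !mulmxA mulmx_ABXu -!scalemxAl -Auw. Qed.

Lemma specrad_ABX k : specrad (A *m B ^+ k) = cabs (cycle_coef k).
Proof. by rewrite Auw -mulmxA specrad_rank1. Qed.

Lemma cycle_rootX k : rho k ^+ k.+1 = cabs (cycle_coef k).
Proof. by rewrite /cycle_root specrad_ABX powR_invnK ?cabs_ge0. Qed.

Lemma cycle_root_le k x : 0 <= x -> (rho k <= x) = (cabs (cycle_coef k) <= x ^+ k.+1).
Proof. by move=> x0; rewrite /cycle_root specrad_ABX powR_invn_le ?cabs_ge0. Qed.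

Lemma word_prod_cycle k s q :
  word_prod A B (q * k.+1 + s).+1 (cycle_coef k ^+ q *: (A *m B ^+ s)).
Proof.
elim: q => [|q IH]; first by rewrite expr0 scale1r; apply/word_prodA/word_prod_BX.
have := word_prod_mulABX k IH; rewrite -scalemxAr mulmx_ABXA scalerA -exprSr.
by congr word_prod; lia.
Qed.

Section WordBound.
Variables (beta K : R).
Hypotheses (beta0 : 0 < beta) (BK : forall k, maxnorm (B ^+ k) <= K * beta ^+ k).
Hypothesis cycle_coef_le : forall k, cabs (cycle_coef k) <= beta ^+ k.+1.

(* The leftmost letter A of a word splits it as B ^+ j *m u times a row vector. *)
Lemma word_prod_shape n P : word_prod A B n P -> P = B ^+ n \/
  exists j m (r : 'rV[R[i]]_d), [/\ n = (j + m).+1, P = B ^+ j *m u *m r &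
    maxnorm r <= d%:R * maxnorm w * K * beta ^+ m].
Proof.
elim => {n P} [|n P _ [->|[j [m [r [-> -> r_le]]]]]|n P _ [->|[j [m [r [-> -> r_le]]]]]].
- by left; rewrite expr0.
- right; exists 0%N, n, (w *m B ^+ n); split => //; first by rewrite expr0 mul1mx Auw mulmxA.
  apply: le_trans (maxnorm_mul _ _) _; rewrite -!mulrA ler_wpM2l ?ler0n //.
  by rewrite ler_wpM2l ?maxnorm_ge0.
- right; exists 0%N, (j + m).+1, (cycle_coef j *: r); split => //.
    by rewrite expr0 mul1mx !mulmxA mulmx_ABXu -scalemxAl -scalemxAr.
  by rewrite maxnormZ -addSn exprD mulrCA ler_pM ?cabs_ge0 ?maxnorm_ge0.
- by left; rewrite exprS mulmxE.
- by right; exists j.+1, m, r; rewrite exprS -mulmxE !mulmxA.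
Qed.

Lemma maxnorm_word_prod_le : exists K2, 0 <= K2 /\
  forall n P, word_prod A B n P -> maxnorm P <= K2 * beta ^+ n.
Proof.
have K0 : 0 <= K by have := BK 0; rewrite expr0 mulr1; apply: le_trans (maxnorm_ge0 _).
set K' := d%:R * maxnorm w * K.
set K2 := Num.max K (d%:R * K * maxnorm u * K' / beta).
exists K2; split=> [|n P /word_prod_shape [->|[j [m [r [-> -> r_le]]]]]].
- by rewrite le_max K0.
- by apply: le_trans (BK n) _; rewrite ler_wpM2r ?exprn_ge0 ?(ltW beta0) // le_max lexx.
apply: le_trans (maxnorm_mul _ _) _; rewrite mul1r.
apply: le_trans (_ : d%:R * (K * beta ^+ j * maxnorm u) * (K' * beta ^+ m) <= _).
  rewrite ler_pM ?maxnorm_ge0 //; apply: le_trans (maxnorm_mul _ _) _.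
  by rewrite ler_wpM2l ?ler0n // ler_wpM2r ?maxnorm_ge0.
apply: le_trans (_ : d%:R * K * maxnorm u * K' / beta * beta ^+ (j + m).+1 <= _).
  by rewrite exprS exprD le_eqVlt; apply/orP; left; apply/eqP; field; rewrite gt_eqF.
by rewrite ler_wpM2r ?exprn_ge0 ?(ltW beta0) // le_max lexx orbT.
Qed.

End WordBound.

Lemma jsr_seqX_le_geometric beta : specrad B < beta ->
  (forall k, cabs (cycle_coef k) <= beta ^+ k.+1) ->
  exists K, forall n, (0 < n)%N -> jsr_seq A B n ^+ n <= K * beta ^+ n.
Proof.
move=> Bbeta cycle_le; have beta0 : 0 < beta := le_lt_trans (specrad_ge0 B) Bbeta.
have [K [_ BK]] := maxnormX_le_geometric dim_gt0 Bbeta.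
have [K2 [K20 wK2]] := maxnorm_word_prod_le beta0 BK cycle_le.
exists K2 => n n0; apply: jsr_seqX_le => //; last exact: wK2.
by rewrite mulr_ge0 ?exprn_ge0 ?(ltW beta0).
Qed.

Lemma jsr_seqX_le_bound l : specrad B <= l -> (forall k, rho k <= l) ->
  forall beta, l < beta ->
  exists K, forall n, (0 < n)%N -> jsr_seq A B n ^+ n <= K * beta ^+ n.
Proof.
move=> Bl rho_le beta l_beta; have l0 := le_trans (specrad_ge0 B) Bl.
apply: jsr_seqX_le_geometric => [|k]; first exact: le_lt_trans Bl l_beta.
rewrite -cycle_root_le ?(le_trans l0 (ltW l_beta)) //.
exact: le_trans (rho_le k) (ltW l_beta).
Qed.

(* The words (A B^k)^q A B^s, with s <= k, realise the growth rate rho k. *)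
Lemma jsr_seqX_ge_cycle k : 0 < rho k ->
  exists2 c, 0 < c & forall n, (0 < n)%N -> c * rho k ^+ n <= jsr_seq A B n ^+ n.
Proof.
move=> rho0; have ABs_neq0 s : (s <= k)%N -> A *m B ^+ s != 0.
  move=> sk; apply: contra_neq (lt0r_neq0 rho0) => ABs0.
  have : cycle_coef k *: u = 0.
    by rewrite -mulmx_ABXu -(subnKC sk) exprD -mulmxE mulmxA ABs0 !mul0mx.
  move/eqP; rewrite scalemx_eq0 (negbTE u_neq0) orbF => /eqP ck0.
  by have /eqP := cycle_rootX k; rewrite ck0 cabs0 expf_eq0 => /andP[_ /eqP].
set g := fun s : 'I_k.+1 => maxnorm (A *m B ^+ s) / rho k ^+ s.+1.
exists (\big[Num.min/1]_s g s) => [|n n0].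
  apply/bigmin_gtP; split=> // s _.
  by rewrite divr_gt0 ?exprn_gt0 // maxnorm_gt0 // ABs_neq0 // -ltnS.
set q := (n.-1 %/ k.+1)%N; set s := Ordinal (ltn_pmod n.-1 (ltn0Sn k)).
have nE : n = (k.+1 * q + s.+1)%N by have := divn_eq n.-1 k.+1; rewrite /= -/q; lia.
apply: le_trans (maxnorm_le_jsr_seqX n0 _); last first.
  by rewrite [n in word_prod _ _ n]nE mulnC addnS; exact: word_prod_cycle.
rewrite maxnormZ cabsX -cycle_rootX -exprM {1}nE exprD mulrCA.
rewrite ler_wpM2l ?exprn_ge0 ?(ltW rho0) // -ler_pdivlMr ?exprn_gt0 //.
exact: bigmin_le.
Qed.

Lemma cabs_cycle_coef_le k :
  cabs (cycle_coef k) <= d%:R * d%:R * maxnorm w * maxnorm (B ^+ k) * maxnorm u.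
Proof. exact: le_trans (maxnorm_entry _ 0 0) (maxnorm_mul3 _ _ _). Qed.

(* |cycle_coef k| grows at most like beta ^+ k for any beta > specrad B, so
   rho k stays below any value it takes above specrad B once k is large. *)
Lemma cycle_root_max k0 : specrad B < rho k0 -> exists k, forall j, rho j <= rho k.
Proof.
move=> Bk0; have rho0 : 0 < rho k0 := le_lt_trans (specrad_ge0 B) Bk0.
set beta := (specrad B + rho k0) / 2.
have [Bbeta beta_rho] := midf_lt Bk0.
have beta0 : 0 < beta := le_lt_trans (specrad_ge0 B) Bbeta.
have [K [_ BK]] := maxnormX_le_geometric dim_gt0 Bbeta.
set K3 := d%:R * d%:R * maxnorm w * K * maxnorm u.
have [N NK3] : exists N, forall j, (N <= j)%N -> K3 / rho k0 <= (rho k0 / beta) ^+ j.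
  by apply: exprn_unbounded; rewrite ltr_pdivlMr // mul1r.
have rho_small j : (N <= j)%N -> rho j <= rho k0.
  move=> Nj; rewrite cycle_root_le ?(ltW rho0) //.
  apply: le_trans (cabs_cycle_coef_le j) _; apply: le_trans (_ : K3 * beta ^+ j <= _).
    rewrite /K3 [leRHS]mulrAC ler_wpM2r ?maxnorm_ge0 // -[leRHS]mulrA.
    by rewrite ler_wpM2l ?mulr_ge0 ?ler0n ?maxnorm_ge0.
  have := NK3 j Nj; rewrite expr_div_n ler_pdivlMr ?exprn_gt0 // mulrAC.
  by rewrite ler_pdivrMr // exprSr.
have [k _ kmax] := exists_argmax_leq rho (maxn N k0).
exists k => j; have [jN|Nj] := leqP j (maxn N k0); first exact: kmax.
apply: le_trans (rho_small j _) (kmax k0 (leq_maxr _ _)).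
exact: leq_trans (leq_maxl _ _) (ltnW Nj).
Qed.

Lemma jsr2_specrad : (forall k, rho k <= specrad B) -> jsr2 A B = specrad B.
Proof.
move=> rho_le; apply: limn_root_sandwich (specrad_ge0 B) (@jsr_seq_ge0 _ _ A B) _ _.
  exact: jsr_seqX_le_bound.
move=> t t0 /(specrad_gt (ltW t0)) [mu Bmu t_mu].
exists (cabs mu), d%:R^-1; split=> // [|n n0]; first by rewrite invr_gt0 ltr0n dim_gt0.
by rewrite ler_pdivrMl ?ltr0n ?dim_gt0 // jsr_seqX_ge_eigenvalue.
Qed.

Lemma jsr2_cycle_root k : specrad B < rho k -> (forall j, rho j <= rho k) ->
  jsr2 A B = rho k.
Proof.
move=> Bk rho_le; have rho0 : 0 < rho k := le_lt_trans (specrad_ge0 B) Bk.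
apply: limn_root_sandwich (ltW rho0) (@jsr_seq_ge0 _ _ A B) _ _.
  exact: jsr_seqX_le_bound (ltW Bk) rho_le.
have [c c0 hc] := jsr_seqX_ge_cycle rho0.
by move=> t _ t_rho; exists (rho k), c.
Qed.

End RankOne.

Theorem corollary4 (R : realType) (d : nat) (A B : 'M[R[i]]_d) :
  \rank A = 1%N ->
  jsr2 A B = specrad B \/
  exists n : nat, jsr2 A B = specrad (A *m B ^+ n) `^ (n.+1%:R^-1).
Proof.
move=> rkA; have [u [w Auw]] := rank1_factor rkA.
have A_neq0 : A != 0 by rewrite -mxrank_eq0 rkA.
have [[k0 Bk0]|rho_small] := pselect (exists k, specrad B < cycle_root A B k).
  have [k kmax] := cycle_root_max Auw A_neq0 Bk0.
  right; exists k.
  by rewrite (jsr2_cycle_root Auw A_neq0 (lt_le_trans Bk0 (kmax k0)) kmax).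
left; rewrite (jsr2_specrad Auw A_neq0) // => k.
by rewrite leNgt; apply/negP => Bk; apply: rho_small; exists k.
Qed.
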